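(* Let $m,n,a$ be natural numbers with $m\geq 2$, $1\leq a\leq 9$ and $a\neq 6$. Then the equation $$B_n = a\left(\frac{10^m-1}{9}\right)$$ has no solution. That is, no balancing number is a decimal repdigit with at least two digits whose repeated digit differs from $6$.
   Context: The balancing sequence $(B_n)_{n\geq 0}$ is defined by $B_0=0$, $B_1=1$ and $B_{n+1}=6B_n-B_{n-1}$ for $n\geq 1$. For $1\le a\le 9$ and $m\ge 1$, the number $a\frac{10^m-1}{9}$ is the decimal integer consisting of $m$ copies of the digit $a$. *)

From mathcomp Require Import all_boot.

(* Balancing sequence: B_0 = 0, B_1 = 1, B_(n+2) = 6 B_(n+1) - B_n.
   Computed over nat; the sequence is nondecreasing so 6 B_(n+1) >= B_n and
   the truncated subtraction is exact. *)
Fixpoint balpair (n : nat) : nat * nat :=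
  match n with
  | 0 => (0, 1)
  | k.+1 => let: (x, y) := balpair k in (y, 6 * y - x)
  end.

Definition B (n : nat) : nat := (balpair n).1.

Definition repdigit (a m : nat) : nat := a * ((10 ^ m - 1) %/ 9).

(* Modulo 220 = 4 * 5 * 11 the balancing numbers are periodic with period 12
   and take only twelve residues, while for m >= 2 the repunit (10^m - 1)/9
   is 11 or 111 modulo 220.  A direct check shows that a * 11 and a * 111 hit
   one of the twelve residues only for a = 6. *)
From mathcomp Require Import all_boot.
From mathcomp Require Import zify.

Lemma B_rec n : B n.+2 = 6 * B n.+1 - B n.
Proof. by rewrite /B /=; case: (balpair n). Qed.

Lemma B_leSn n : B n <= B n.+1.
Proof. by elim: n => // n IH; rewrite B_rec; lia. Qed.

Lemma iter_mod_period (T : Type) (f : T -> T) (x : T) p n :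
  iter p f x = x -> iter n f x = iter (n %% p) f x.
Proof.
move=> fix_p; rewrite {1}(divn_eq n p) addnC iterD.
by rewrite iterM (iter_fix _ fix_p).
Qed.

Section BalancingModulo.

Variable d : nat.
Hypothesis d_gt0 : 0 < d.

(* [d - x] stands for [-x] modulo [d], which is correct because residues are
   below [d]; [d = 0] genuinely fails. *)
Definition balstep (xy : nat * nat) : nat * nat :=
  (xy.2, (6 * xy.2 + (d - xy.1)) %% d).

Lemma B_pair_mod n : (B n %% d, B n.+1 %% d) = iter n balstep (0, 1 %% d).
Proof.
elim: n => [|n IH]; first by rewrite /B /= mod0n.
rewrite iterS -IH /balstep /=; congr (_, _).
have le_B := B_leSn n.
rewrite B_rec -modnDml modnMmr modnDml.
have -> : 6 * B n.+1 + (d - B n %% d) = (B n %/ d).+1 * d + (6 * B n.+1 - B n).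
  have := ltn_pmod (B n) d_gt0; have := divn_eq (B n) d.
  move: (B n %/ d) (B n %% d) => q r; lia.
by rewrite modnMDl.
Qed.

Lemma B_mod_periodic p n :
  iter p balstep (0, 1 %% d) = (0, 1 %% d) ->
  B n %% d = (iter (n %% p) balstep (0, 1 %% d)).1.
Proof. by move=> per; rewrite -(@iter_mod_period _ _ _ _ n per) -B_pair_mod. Qed.

End BalancingModulo.

Definition B_residues220 : seq nat :=
  [:: 0; 1; 6; 35; 204; 89; 110; 131; 16; 185; 214; 219].

Lemma B_mod220 n : B n %% 220 \in B_residues220.
Proof.
rewrite (@B_mod_periodic 220 _ 12) //.
have : n %% 12 < 12 by rewrite ltn_pmod.
by move: (n %% 12); do 12! case=> //.
Qed.

Definition repunit (m : nat) : nat := (10 ^ m - 1) %/ 9.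

Lemma repunit_div9 r : (10 * (9 * r).+1 - 1) %/ 9 = 10 * r + 1.
Proof.
have -> : 10 * (9 * r).+1 - 1 = 9 * (10 * r + 1) by lia.
by rewrite mulKn.
Qed.

Lemma expn10_repunit m : 10 ^ m = (9 * repunit m).+1.
Proof.
elim: m => // m IH.
by rewrite [repunit _]/repunit !expnS IH repunit_div9; lia.
Qed.

Lemma repunitS m : repunit m.+1 = 10 * repunit m + 1.
Proof. by rewrite [repunit _]/repunit expnS expn10_repunit repunit_div9. Qed.

Lemma repunit_mod220 m : 2 <= m -> repunit m %% 220 \in [:: 11; 111].
Proof.
elim: m => // m IH; rewrite ltnS leq_eqVlt => /predU1P[<- // | /IH].
rewrite repunitS -modnDml -modnMmr !inE.
by case/orP=> /eqP ->.
Qed.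

Theorem theorem1 (m n a : nat) :
  2 <= m -> 1 <= a <= 9 -> a != 6 -> B n <> repdigit a m.
Proof.
move=> m_ge2 a_digit a_neq6 Bn_eq.
have := B_mod220 n; rewrite Bn_eq /repdigit -/(repunit m) -modnMmr.
have := repunit_mod220 _ m_ge2; rewrite !inE => /orP[] /eqP ->.
all: by move: a a_digit a_neq6 {Bn_eq}; do 10! case=> //.
Qed.
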